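(* For $\sigma^2>0$ let $\Phi(\cdot;\sigma^2)$ denote the cumulative distribution function of $\mathcal{N}(0,\sigma^2)$. Fix $\alpha\ge0$ and $\beta^2\in(0,1)$. Let $\lambda_1\ge\lambda_2\ge0$ and $\sigma_1^2,\sigma_2^2\ge1$ satisfy $\lambda_1-\lambda_2\le\alpha$ and $\frac{\sigma_1^2}{\sigma_2^2},\frac{\sigma_2^2}{\sigma_1^2}\in[1-\beta^2,1+\beta^2]$. Let \[ X=\sqrt{\frac{8}{\pi}}\,\frac{\alpha+\beta^2\lambda_1}{\min\{\sigma_1,\sigma_2\}}\exp\Big(-\frac{\lambda_2^2(1-\beta^2)}{2\max\{\sigma_1^2,\sigma_2^2\}}\Big). \] Then both $\frac{\Phi(\lambda_1;\sigma_1^2)}{\Phi(\lambda_2;\sigma_2^2)}$ and $\frac{\Phi(\lambda_2;\sigma_2^2)}{\Phi(\lambda_1;\sigma_1^2)}$ lie in $[1-\beta^2-X,\ 1+\beta^2+X]$. *)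

From HB Require Import structures.
From mathcomp Require Import all_boot all_order all_algebra.
From mathcomp Require Import all_classical all_reals all_analysis.
Set Implicit Arguments. Unset Strict Implicit. Unset Printing Implicit Defensive.
Import Order.TTheory GRing.Theory Num.Theory.
Local Open Scope ring_scope.
Local Open Scope classical_set_scope.

(* Phi s x : CDF at x of the centered normal distribution N(0, s^2)
   (s = standard deviation), i.e. normal_prob 0 s of ]-oo, x]. *)
Definition Phi {R : realType} (s x : R) : R :=
  fine (normal_prob 0 s `]-oo, x]).

From HB Require Import structures.
From mathcomp Require Import all_boot all_order all_algebra.
From mathcomp Require Import all_classical all_reals all_analysis.
From mathcomp Require Import ring lra measurable_realfun.
Import Order.TTheory GRing.Theory Num.Theory.
Local Open Scope ring_scope.

(* Standardising gives Phi s l = Phi 1 (l / s), so both ratios compare Phi 1 a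
   and Phi 1 b for the nonnegative standard scores a = l1 / s1, b = l2 / s2.
   Since Phi 1 >= 1/2 on [0, +oo), each ratio is within 2 |Phi 1 a - Phi 1 b|
   of 1, and as the standard density decreases on [0, +oo) that difference is
   at most |a - b| times the density at min(a, b).  The variance ratio bound
   gives min(s1, s2) >= (1 - beta^2) max(s1, s2), whence
   |a - b| <= (alpha + beta^2 l1) / min(s1, s2); and min(a, b) >= l2 / max(s1, s2)
   bounds the density by the exponential factor of X. *)

Section real_field_bounds.
Context {R : realFieldType}.

Lemma ratio_dist1_le (A B D : R) : 1 / 2 <= B -> `|A - B| <= D ->
  `|A / B - 1| <= 2 * D.
Proof.
move=> hB hAB; have B0 : 0 < B by lra.
have -> : A / B - 1 = (A - B) / B by field; rewrite gt_eqF.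
rewrite normrM normfV (gtr0_norm B0) ler_pdivrMr//.
by have := normr_ge0 (A - B); nra.
Qed.

Lemma mulr_le_of_sqr_le (c u v : R) : 0 <= c <= 1 -> 0 <= u -> 0 <= v ->
  c * v ^+ 2 <= u ^+ 2 -> c * v <= u.
Proof.
move=> /andP[c0 c1] u0 v0 h.
rewrite -(@ler_pXn2r _ 2) ?nnegrE ?mulr_ge0//; apply: le_trans h.
by rewrite exprMn ler_wpM2r ?sqr_ge0//; nra.
Qed.

Lemma std_score_dist_le (al be l1 l2 s1 s2 : R) : 0 <= be <= 1 ->
  0 <= l2 -> l2 <= l1 -> l1 - l2 <= al -> 0 < s1 -> 0 < s2 ->
  1 - be <= s1 ^+ 2 / s2 ^+ 2 -> 1 - be <= s2 ^+ 2 / s1 ^+ 2 ->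
  `|l1 / s1 - l2 / s2| <= (al + be * l1) / Num.min s1 s2.
Proof.
move=> /andP[b0 b1] l20 l12 hal s10 s20 h12 h21.
rewrite !ler_pdivlMr ?exprn_gt0// in h12 h21.
have c01 : 0 <= 1 - be <= 1 by apply/andP; split; lra.
have k12 : (1 - be) * s2 <= s1 by apply: mulr_le_of_sqr_le => //; exact: ltW.
have k21 : (1 - be) * s1 <= s2 by apply: mulr_le_of_sqr_le => //; exact: ltW.
set x := l1 / s1; set y := l2 / s2.
have ex : l1 = x * s1 by rewrite /x divfK ?gt_eqF.
have ey : l2 = y * s2 by rewrite /y divfK ?gt_eqF.
have x0 : 0 <= x by apply: divr_ge0; [exact: le_trans l20 l12|exact: ltW].
have y0 : 0 <= y by apply: divr_ge0 => //; exact: ltW.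
rewrite ex ey in l12 hal *.
(* For s1 <= s2: 0 <= l1 - l2 s1 / s2 = (l1 - l2) + l2 (1 - s1 / s2) <= al + be l1;
   the case s2 < s1 is symmetric. *)
by have [s12|s21] := leP s1 s2; apply/ler_normlP; split; rewrite ler_pdivlMr//; nra.
Qed.

Lemma min_std_score_ge (l1 l2 s1 s2 : R) : 0 <= l2 -> l2 <= l1 ->
  0 < s1 -> 0 < s2 -> l2 / Num.max s1 s2 <= Num.min (l1 / s1) (l2 / s2).
Proof.
move=> l20 l12 s10 s20; have M0 : 0 < Num.max s1 s2 by rewrite lt_max s10.
have le_div l s : 0 <= l -> 0 < s -> s <= Num.max s1 s2 -> l / Num.max s1 s2 <= l / s.
  by move=> l0 s0 sM; rewrite ler_wpM2l// lef_pV2 ?posrE.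
rewrite le_min; apply/andP; split.
- apply: le_trans (le_div _ _ (le_trans l20 l12) s10 _); last by rewrite le_max lexx.
  by apply: ler_wpM2r => //; rewrite invr_ge0 ltW.
- by apply: le_div; rewrite ?le_max ?lexx ?orbT.
Qed.

Lemma max_sqr (s1 s2 : R) : 0 <= s1 -> 0 <= s2 ->
  Num.max (s1 ^+ 2) (s2 ^+ 2) = Num.max s1 s2 ^+ 2.
Proof.
move=> s10 s20; have [s12|/ltW s21] := leP s1 s2.
- by apply/max_idPr; rewrite ler_sqr.
- by apply/max_idPl; rewrite ler_sqr.
Qed.

End real_field_bounds.

Section normal_distribution.
Context {R : realType}.
Local Open Scope classical_set_scope.
Implicit Types s a b x : R.

Lemma normal_pdf0_scale s x : 0 < s ->
  normal_pdf 0 s (x * s) * s = normal_pdf 0 1 x.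
Proof.
move=> s0; rewrite /normal_pdf gt_eqF// oner_eq0 /normal_peak /normal_fun.
have -> : - (x * s - 0) ^+ 2 / (s ^+ 2 *+ 2) = - (x - 0) ^+ 2 / (1 ^+ 2 *+ 2).
  by field; rewrite gt_eqF// exprn_gt0.
rewrite mulrAC; congr (_ * _).
rewrite -!mulrnAr sqrtrM ?sqr_ge0// sqrtr_sqr gtr0_norm// expr1n mul1r.
by rewrite invfM mulrAC mulVf ?gt_eqF// mul1r.
Qed.

Lemma Phi_scale s x : 0 < s -> Phi s x = Phi 1 (x / s).
Proof.
move=> s0; rewrite /Phi /normal_prob.
pose F t := t * s.
have dF : F^`()%classic = cst s.
  apply/funext => t; rewrite derive1E deriveM// derive_cst derive_id.
  by rewrite scaler0 add0r /= [_ *: _]mulr1.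
have cpdf := @continuous_normal_pdf R 0 s (lt0r_neq0 s0).
have -> : `]-oo, x] = `]-oo, F (x / s)] :> set R by rewrite /F divfK ?gt_eqF.
rewrite (@increasing_ge0_integration_by_substitutionNy _ F (normal_pdf 0 s)).
- congr fine; apply: eq_integral => t _ /=.
  by rewrite dF; congr EFin; exact: normal_pdf0_scale.
- by move=> a b _ _ ab; rewrite /F ltr_pM2r.
- by rewrite dF => ? _; exact: cvg_cst.
- by rewrite dF; exact: is_cvg_cst.
- by rewrite dF; exact: cvg_cst.
- split; first by move=> ? _; exact: derivableM.
  by apply: cvg_at_left_filter; exact: mulrr_continuous.
- by apply: gt0_cvgMlNy => //; exact: cvg_id.
- apply/continuous_within_itvNycP; split => [y _|]; first exact: cpdf.
  exact/cvg_at_left_filter/cpdf.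
- by move=> y _; exact: normal_pdf_ge0.
Qed.

Lemma normal_pdf0N s x : s != 0 -> normal_pdf 0 s (- x) = normal_pdf 0 s x.
Proof. by move=> s0; rewrite /normal_pdf (negbTE s0) /normal_fun !subr0 sqrrN. Qed.

Lemma normal_pdf0_le s a x : s != 0 -> 0 <= a -> a <= x ->
  normal_pdf 0 s x <= normal_pdf 0 s a.
Proof.
move=> s0 a0 ax; rewrite /normal_pdf (negbTE s0) ler_wpM2l ?normal_peak_ge0//.
rewrite /normal_fun ler_expR !subr0 !mulNr lerN2 ler_wpM2r ?invr_ge0 ?mulrn_wge0 ?sqr_ge0//.
by rewrite ler_sqr// ?nnegrE// (le_trans a0 ax).
Qed.

Lemma normal_prob_fin_num s (A : set R) : measurable A -> normal_prob 0 s A \is a fin_num.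
Proof. exact: (fin_num_measure (normal_prob 0 s)). Qed.

Lemma Phi_homo_le s : {homo Phi s : a b / a <= b}.
Proof.
move=> a b ab; apply: fine_le; rewrite ?normal_prob_fin_num//.
by apply: le_measure; rewrite ?inE// => x /=; rewrite !in_itv /= => /le_trans; apply.
Qed.

Lemma Phi0 s : s != 0 -> Phi s 0 = 1 / 2.
Proof.
move=> s0; rewrite /Phi /normal_prob.
have cpdf := @continuous_normal_pdf R 0 s s0.
have := ge0_symfun_integralT (normal_pdf_ge0 0 s) cpdf (fun x => esym (normal_pdf0N s x s0)).
rewrite integral_normal_pdf -set_itvcy -[in `]-oo, _]]oppr0.
rewrite ge0_integration_by_substitutionNy; last 2 first.
- apply/continuous_within_itvNycP; split => [y _|]; first exact: cpdf.
  exact/cvg_at_left_filter/cpdf.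
- by move=> y _; exact: normal_pdf_ge0.
rewrite (_ : normal_pdf 0 s \o -%R = normal_pdf 0 s); last first.
  by apply/funext => x /=; rewrite normal_pdf0N.
case: (\int[_]_(x in _) _)%E => [r||] //=.
- by move=> /(congr1 fine) /= h; lra.
- by move=> /eqP; rewrite mulry gtr0_sg// mul1e.
- by move=> /eqP; rewrite mulrNy gtr0_sg// mul1e.
Qed.

Lemma Phi_ge_half s a : s != 0 -> 0 <= a -> 1 / 2 <= Phi s a.
Proof. by move=> s0 a0; rewrite -(Phi0 _ s0); exact: Phi_homo_le. Qed.

Lemma Phi_sub_le s a b : s != 0 -> 0 <= a -> a <= b ->
  Phi s b - Phi s a <= (b - a) * normal_pdf 0 s a.
Proof.
move=> s0 a0 ab; rewrite /Phi.
have -> : `]-oo, b] = `]-oo, a] `|` `]a, b] :> set R.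
  by apply: itv_bndbnd_setU; rewrite bnd_simp.
rewrite measureU //; last first.
  apply/seteqP; split => // y /=; rewrite !in_itv/= => -[ya /andP[ay _]].
  by move: (lt_le_trans ay ya); rewrite ltxx.
rewrite fineD ?normal_prob_fin_num// addrAC subrr add0r -[leRHS]/(fine _%:E).
apply: fine_le; rewrite ?normal_prob_fin_num//.
apply: (@le_trans _ _ (\int[lebesgue_measure]_(x in `]a, b]) (normal_pdf 0 s a)%:E)%E).
  apply: ge0_le_integral => //.
  - by move=> x _; rewrite lee_fin normal_pdf_ge0.
  - by apply/measurable_EFinP/measurable_funTS; exact: measurable_normal_pdf.
  - move=> x /=; rewrite in_itv/= => /andP[ax _].
    by rewrite lee_fin normal_pdf0_le// ltW.
rewrite integral_cst//= lebesgue_measure_itv/= lte_fin.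
case: ltP => [_|ba]; first by rewrite -EFinD -EFinM mulrC.
by rewrite mule0 lee_fin mulr_ge0 ?normal_pdf_ge0// subr_ge0.
Qed.

Lemma Phi_dist_le s a b : s != 0 -> 0 <= a -> 0 <= b ->
  `|Phi s a - Phi s b| <= `|a - b| * normal_pdf 0 s (Num.min a b).
Proof.
move=> s0 a0 b0.
have le_dist c d : 0 <= c -> c <= d ->
    `|Phi s c - Phi s d| <= `|c - d| * normal_pdf 0 s c.
  move=> c0 cd; rewrite distrC ger0_norm ?subr_ge0 ?Phi_homo_le//.
  by rewrite distrC ger0_norm ?subr_ge0//; exact: Phi_sub_le.
have [ab|/ltW ba] := leP a b; first exact: le_dist.
by rewrite distrC [`|a - b|]distrC; exact: le_dist.
Qed.

Lemma normal_peak1_le : 2 * normal_peak 1 <= Num.sqrt (8 / pi) :> R.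
Proof.
have pi0 : (0 : R) < pi := pi_gt0 R.
have pi2 : (0 : R) <= pi *+ 2 by rewrite mulrn_wge0 // ltW.
rewrite /normal_peak expr1n mul1r -(@ler_pXn2r _ 2) ?nnegrE ?mulr_ge0 ?invr_ge0 ?sqrtr_ge0//.
rewrite exprMn exprVn !sqr_sqrtr ?divr_ge0 ?(ltW pi0)//.
move: pi0; generalize (pi : R) => p p0.
have -> : 2 ^+ 2 / (p *+ 2) = 2 / p by rewrite -mulr_natr; field; rewrite gt_eqF.
by rewrite ler_pM2r ?invr_gt0//; lra.
Qed.

Lemma two_normal_pdf01_le (c t x : R) : 0 <= c <= 1 -> 0 <= t -> t <= x ->
  2 * normal_pdf 0 1 x <= Num.sqrt (8 / pi) * expR (- (t ^+ 2 * c) / 2).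
Proof.
move=> /andP[c0 c1] t0 tx; rewrite /normal_pdf oner_eq0 mulrA.
rewrite ler_pM ?mulr_ge0 ?normal_peak_ge0 ?normal_fun_ge0 ?normal_peak1_le//.
rewrite /normal_fun ler_expR expr1n subr0.
rewrite !mulNr lerN2 ler_wpM2r ?invr_ge0 ?ler0n//.
have : t ^+ 2 <= x ^+ 2 by rewrite ler_sqr ?nnegrE ?(le_trans t0).
by have := sqr_ge0 t; nra.
Qed.

Lemma two_normal_pdf01_min_le (be l1 l2 s1 s2 : R) : 0 <= be <= 1 ->
  0 <= l2 -> l2 <= l1 -> 0 < s1 -> 0 < s2 ->
  2 * normal_pdf 0 1 (Num.min (l1 / s1) (l2 / s2)) <=
  Num.sqrt (8 / pi) * expR (- (l2 ^+ 2 * (1 - be)) / (2 * Num.max (s1 ^+ 2) (s2 ^+ 2))).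
Proof.
move=> /andP[b0 b1] l20 l12 s10 s20.
have M0 : 0 < Num.max s1 s2 by rewrite lt_max s10.
rewrite (max_sqr _ _ (ltW s10) (ltW s20)); set M := Num.max s1 s2.
have -> : - (l2 ^+ 2 * (1 - be)) / (2 * M ^+ 2) = - ((l2 / M) ^+ 2 * (1 - be)) / 2.
  by field; rewrite gt_eqF.
apply: two_normal_pdf01_le; first by apply/andP; split; lra.
- by rewrite divr_ge0 ?(ltW M0).
- exact: min_std_score_ge.
Qed.

End normal_distribution.

Theorem lemmaB3 (R : realType) (alpha beta2 l1 l2 s1 s2 : R)
  (halpha : 0 <= alpha) (hb0 : 0 < beta2) (hb1 : beta2 < 1)
  (hl12 : l2 <= l1) (hl2 : 0 <= l2)
  (hs1 : 0 < s1) (hs2 : 0 < s2)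
  (hs1' : 1 <= s1 ^+ 2) (hs2' : 1 <= s2 ^+ 2)
  (hdl : l1 - l2 <= alpha)
  (hr1 : 1 - beta2 <= s1 ^+ 2 / s2 ^+ 2) (hr1' : s1 ^+ 2 / s2 ^+ 2 <= 1 + beta2)
  (hr2 : 1 - beta2 <= s2 ^+ 2 / s1 ^+ 2) (hr2' : s2 ^+ 2 / s1 ^+ 2 <= 1 + beta2) :
  let X := Num.sqrt (8 / pi) * ((alpha + beta2 * l1) / Num.min s1 s2)
           * expR (- (l2 ^+ 2 * (1 - beta2)) / (2 * Num.max (s1 ^+ 2) (s2 ^+ 2))) in
  (1 - beta2 - X <= Phi s1 l1 / Phi s2 l2 <= 1 + beta2 + X) /\
  (1 - beta2 - X <= Phi s2 l2 / Phi s1 l1 <= 1 + beta2 + X).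
Proof.
move=> X; rewrite (Phi_scale _ _ hs1) (Phi_scale _ _ hs2).
set a := l1 / s1; set b := l2 / s2.
have b0 : 0 <= b by apply: divr_ge0 => //; exact: ltW.
have a0 : 0 <= a by apply: divr_ge0; [exact: le_trans hl12|exact: ltW].
have be01 : 0 <= beta2 <= 1 by apply/andP; split; exact: ltW.
have dPhi := Phi_dist_le 1 a b (oner_neq0 R) a0 b0.
have dab : `|a - b| <= (alpha + beta2 * l1) / Num.min s1 s2.
  exact: std_score_dist_le.
have pdf_min := two_normal_pdf01_min_le _ _ _ _ _ be01 hl2 hl12 hs1 hs2.
have dX : 2 * (`|a - b| * normal_pdf 0 1 (Num.min a b)) <= X.
  rewrite mulrCA; apply: le_trans (ler_pM _ _ dab pdf_min) _.
  - exact: normr_ge0.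
  - by rewrite mulr_ge0 ?normal_pdf_ge0.
  - by rewrite /X mulrA [_ * Num.sqrt _]mulrC.
have within A B : 1 / 2 <= B -> `|A - B| <= `|a - b| * normal_pdf 0 1 (Num.min a b) ->
    1 - beta2 - X <= A / B <= 1 + beta2 + X.
  move=> hB hAB; have /ler_normlP[h1 h2] : `|A / B - 1| <= X.
    by apply: le_trans dX; exact: ratio_dist1_le.
  by apply/andP; split; lra.
split; apply: within; rewrite ?Phi_ge_half ?oner_neq0//.
by rewrite distrC.
Qed.
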